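(* Let $G$ be a generalized split graph (GSP graph). Then $p(G)\le 2$.
   Context: A graph $G$ is a GSP (generalized split) graph if either $G$ or its complement $\overline{G}$ has the following form: its vertex set is partitioned into $V_1,V_2$ where $V_1$ spans a complete graph and $V_2$ spans a disjoint union of complete graphs with no edges between them. A comparability graph is a graph admitting a transitive orientation. $p(G)$ is the minimum number $m$ such that $E(G)$ is the union of the edge sets of $m$ pairwise edge-disjoint comparability subgraphs of $G$. *)

From mathcomp Require Import all_boot.
Set Implicit Arguments. Unset Strict Implicit. Unset Printing Implicit Defensive.

Definition simple_graph (T : finType) (g : rel T) : Prop :=
  symmetric g /\ irreflexive g.

Definition compl_graph (T : finType) (g : rel T) : rel T :=
  fun x y => (x != y) && ~~ g x y.

Definition is_clique (T : finType) (g : rel T) (S : {set T}) : Prop :=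
  forall x y, x \in S -> y \in S -> x != y -> g x y.

(* V(g) = V1 ⊔ V2, V1 spans a complete graph, V2 spans a disjoint union of
   complete graphs with no edges between them (given by a partition P of V2). *)
Definition gsp_form (T : finType) (g : rel T) : Prop :=
  exists (V1 : {set T}) (P : {set {set T}}),
    is_clique g V1 /\
    partition P (~: V1) /\
    (forall B, B \in P -> is_clique g B) /\
    (forall B C x y, B \in P -> C \in P -> B != C -> x \in B -> y \in C -> ~~ g x y).

Definition GSP (T : finType) (g : rel T) : Prop :=
  gsp_form g \/ gsp_form (compl_graph g).

Definition subgraph (T : finType) (h g : rel T) : Prop :=
  simple_graph h /\ forall x y, h x y -> g x y.

Definition transitive_orientation (T : finType) (h o : rel T) : Prop :=
  (forall x y, h x y = o x y || o y x) /\
  (forall x y, o x y -> ~~ o y x) /\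
  transitive o.

Definition comparability (T : finType) (h : rel T) : Prop :=
  exists o : rel T, transitive_orientation h o.

Definition comparability_cover (T : finType) (g : rel T) (m : nat)
    (hs : nat -> rel T) : Prop :=
  (forall i, i < m -> subgraph (hs i) g /\ comparability (hs i)) /\
  (forall i j x y, i < m -> j < m -> i != j -> ~~ (hs i x y && hs j x y)) /\
  (forall x y, g x y -> exists2 i, i < m & hs i x y).

(* p(G) <= k  iff  some m <= k admits such a cover (p(G) is the minimum m). *)
Definition p_le (T : finType) (g : rel T) (k : nat) : Prop :=
  exists m, m <= k /\ exists hs, comparability_cover g m hs.

From mathcomp Require Import all_boot.

Set Implicit Arguments.
Unset Strict Implicit.
Unset Printing Implicit Defensive.

(* Split the edges of G by a set A: the edges crossing A, oriented from A
   outwards, admit no directed path of length two, so that orientation is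
   transitive. The edges inside A or inside its complement are oriented along
   a ranking k of the vertices. If G itself has the GSP form (with A = V1),
   these edges form a disjoint union of cliques and k can be any linear order.
   If the complement has it, V1 is independent and V2 induces a complete
   multipartite graph whose parts are the blocks, and k ranks the blocks. *)

Section Orientations.
Variable T : finType.

Lemma edge_neq (g : rel T) x y : irreflexive g -> g x y -> x != y.
Proof. by move=> irr_g; apply: contraTneq => ->; rewrite irr_g. Qed.

Definition symc (o : rel T) : rel T := fun x y => o x y || o y x.

Definition asymmetric (o : rel T) : Prop := forall x y, o x y -> ~~ o y x.

Lemma comparability_symc (o : rel T) :
  asymmetric o -> transitive o -> comparability (symc o).
Proof. by move=> asym_o trans_o; exists o; split. Qed.

Lemma subgraph_symc (g o : rel T) :
  symmetric g -> subrel o g -> asymmetric o -> subgraph (symc o) g.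
Proof.
move=> sym_g sub_o asym_o; split; first split.
- by move=> x y; rewrite /symc orbC.
- move=> x; rewrite /symc orbb; apply/negP => oxx.
  by move: (asym_o _ _ oxx); rewrite oxx.
- by move=> x y /orP[/sub_o // | /sub_o]; rewrite sym_g.
Qed.

Lemma p_le2_of_orientations (g o1 o2 : rel T) :
  symmetric g -> subrel o1 g -> subrel o2 g ->
  asymmetric o1 -> asymmetric o2 -> transitive o1 -> transitive o2 ->
  (forall x y, ~~ (symc o1 x y && symc o2 x y)) ->
  (forall x y, g x y -> symc o1 x y || symc o2 x y) ->
  p_le g 2.
Proof.
move=> sym_g sub1 sub2 asym1 asym2 trans1 trans2 disj cov.
exists 2; split=> //.
exists (fun i => if i == 0 then symc o1 else symc o2); split; [|split].
- move=> [|[|i]] //= _; split.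
  + exact: subgraph_symc.
  + exact: comparability_symc.
  + exact: subgraph_symc.
  + exact: comparability_symc.
- move=> [|[|i]] [|[|j]] x y //= _ _ _.
  by rewrite andbC.
- by move=> x y /cov /orP[]; [exists 0 | exists 1].
Qed.

Section OrientBy.
Variables (e : rel T) (k : T -> nat).

Definition orient_by : rel T := fun x y => e x y && (k x < k y).

Lemma orient_by_asym : asymmetric orient_by.
Proof.
move=> x y /andP[_ lt_xy]; apply/negP => /andP[_ lt_yx].
by move: (ltn_trans lt_xy lt_yx); rewrite ltnn.
Qed.

Lemma orient_by_trans :
  (forall x y z, e x y -> e y z -> k x < k y -> k y < k z -> e x z) ->
  transitive orient_by.
Proof.
move=> e_trans y x z /andP[e_xy lt_xy] /andP[e_yz lt_yz].
by rewrite /orient_by (e_trans x y z) ?(ltn_trans lt_xy lt_yz).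
Qed.

Lemma symc_orient_by x y :
  symmetric e -> e x y -> k x != k y -> symc orient_by x y.
Proof.
move=> sym_e e_xy; rewrite neq_ltn /symc /orient_by (sym_e y x) e_xy.
by case/orP=> ->; rewrite ?orbT.
Qed.

End OrientBy.

Definition side_edge (A : {set T}) (g : rel T) : rel T :=
  fun x y => g x y && ((x \in A) == (y \in A)).

Lemma p_le2_of_side_ranking (g : rel T) (A : {set T}) (k : T -> nat) :
  symmetric g ->
  (forall x y, side_edge A g x y -> k x != k y) ->
  (forall x y z, side_edge A g x y -> side_edge A g y z ->
     k x < k y -> k y < k z -> g x z) ->
  p_le g 2.
Proof.
move=> sym_g k_sep k_trans.
pose out (x : T) : nat := x \notin A.
have sym_side : symmetric (side_edge A g).
  by move=> x y; rewrite /side_edge sym_g eq_sym.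
apply: (@p_le2_of_orientations g (orient_by (side_edge A g) k)
                                 (orient_by g out)) => //.
- by move=> x y /andP[/andP[]].
- by move=> x y /andP[].
- exact: orient_by_asym.
- exact: orient_by_asym.
- apply: orient_by_trans => x y z side_xy side_yz lt_xy lt_yz.
  rewrite /side_edge (k_trans x y z) //=.
  by move: side_xy side_yz => /andP[_ /eqP ->] /andP[_ /eqP ->].
- apply: orient_by_trans => x y z _ _.
  by rewrite /out; case: (y \in A); case: (z \in A).
- move=> x y; apply/negP => /andP[].
  by rewrite /symc /orient_by /side_edge /out eq_sym;
    case: (x \in A); case: (y \in A); rewrite /= ?andbF ?orbF.
- move=> x y g_xy; have [same | diff] := boolP ((x \in A) == (y \in A)).
  + have side_xy : side_edge A g x y by rewrite /side_edge g_xy.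
    by rewrite symc_orient_by ?k_sep.
  + rewrite orbC symc_orient_by //.
    by move: diff; rewrite /out; case: (x \in A); case: (y \in A).
Qed.

End Orientations.

Section SplitStructure.
Variables (T : finType) (h : rel T) (V1 : {set T}) (P : {set {set T}}).
Hypotheses (partP : partition P (~: V1))
           (cliqueP : forall B, B \in P -> is_clique h B)
           (sepP : forall B C x y, B \in P -> C \in P -> B != C ->
                     x \in B -> y \in C -> ~~ h x y).

Lemma pblock_notin [x] : x \notin V1 -> pblock P x \in P /\ x \in pblock P x.
Proof.
by move=> xV; rewrite pblock_mem ?mem_pblock (cover_partition partP) in_setC.
Qed.

Lemma block_edgeE x y :
  x \notin V1 -> y \notin V1 -> x != y -> h x y = (pblock P x == pblock P y).
Proof.
move=> xV yV neq_xy; have [Px xPx] := pblock_notin xV.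
have [Py yPy] := pblock_notin yV.
have [same | ne] := eqVneq (pblock P x) (pblock P y).
  by rewrite -same in yPy; exact: (cliqueP Px xPx yPy neq_xy).
exact: negbTE (sepP Px Py ne xPx yPy).
Qed.

End SplitStructure.

Lemma gsp_form_p_le2 (T : finType) (g : rel T) :
  simple_graph g -> gsp_form g -> p_le g 2.
Proof.
move=> [sym_g irr_g] [V1 [P [cliqueV1 [partP [cliqueP sepP]]]]].
apply: (@p_le2_of_side_ranking _ g V1 (fun x => enum_rank x)) => //.
  move=> x y /andP[/(edge_neq irr_g) neq_xy _].
  by apply: contraNneq neq_xy => /val_inj/enum_rank_inj ->.
move=> x y z /andP[g_xy /eqP xy] /andP[g_yz /eqP yz] lt_xy lt_yz.
have neq_xz : x != z.
  by apply: contraTneq (ltn_trans lt_xy lt_yz) => ->; rewrite ltnn.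
have [xV1 | xV2] := boolP (x \in V1).
  by apply: cliqueV1 => //; rewrite -yz -xy.
have yV2 : y \notin V1 by rewrite -xy.
have zV2 : z \notin V1 by rewrite -yz.
have same_block u v :
    u \notin V1 -> v \notin V1 -> g u v -> pblock P u = pblock P v.
  move=> uV vV g_uv; apply/eqP.
  by rewrite -(block_edgeE partP cliqueP sepP) ?(edge_neq irr_g).
rewrite (block_edgeE partP cliqueP sepP) //.
by rewrite (same_block x y) ?(same_block y z).
Qed.

Lemma gsp_form_compl_p_le2 (T : finType) (g : rel T) :
  simple_graph g -> gsp_form (compl_graph g) -> p_le g 2.
Proof.
move=> [sym_g irr_g] [V1 [P [indepV1 [partP [indepP sepP]]]]].
have edgeE x y : x \notin V1 -> y \notin V1 -> x != y ->
    g x y = (pblock P x != pblock P y).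
  move=> xV yV neq_xy.
  by rewrite -(block_edgeE partP indepP sepP) // /compl_graph neq_xy negbK.
have side_notin x y : side_edge V1 g x y -> (x \notin V1) && (y \notin V1).
  move=> /andP[g_xy /eqP xy]; rewrite -xy andbb; apply/negP => xV1.
  have yV1 : y \in V1 by rewrite -xy.
  have neq_xy := edge_neq irr_g g_xy.
  by move: (indepV1 x y xV1 yV1 neq_xy); rewrite /compl_graph g_xy andbF.
pose k x := nat_of_ord (enum_rank (pblock P x)).
have k_eq x y : k x = k y -> pblock P x = pblock P y.
  by move/val_inj/enum_rank_inj.
apply: (@p_le2_of_side_ranking _ g V1 k) => //.
  move=> x y side_xy; have /andP[xV yV] := side_notin x y side_xy.
  have /andP[g_xy _] := side_xy.
  have diff_xy : pblock P x != pblock P y by rewrite -edgeE ?(edge_neq irr_g).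
  by apply: contraNneq diff_xy => /k_eq ->.
move=> x y z side_xy side_yz lt_xy lt_yz.
have /andP[xV _] := side_notin x y side_xy.
have /andP[_ zV] := side_notin y z side_yz.
have diff_xz : pblock P x != pblock P z.
  by apply: contraTneq (ltn_trans lt_xy lt_yz) => same; rewrite /k same ltnn.
have neq_xz : x != z by apply: contraNneq diff_xz => ->.
by rewrite edgeE.
Qed.

Theorem theorem3 (T : finType) (g : rel T) :
  simple_graph g -> GSP g -> p_le g 2.
Proof.
move=> simple_g [gsp_g | gsp_compl].
- exact: gsp_form_p_le2.
- exact: gsp_form_compl_p_le2.
Qed.
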